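(* Let $\mathcal{O}=(S,S_+,R,E,f,N)$ be an observation table, and let $(\overline{b_\omega})_{\omega\in S\cup S_+\cup R}$ and $(\overline{q_\omega})_{\omega\in S\cup S_+\cup R}$ be an assignment of the ending reset variables and location variables satisfying $C_1\wedge C_2\wedge C_3\wedge C_4$. Let $\mathcal{H}$ be the hypothesis automaton constructed from $\mathcal{O}$ and this assignment. Then: (i) $\mathcal{H}$ is a deterministic one-clock timed automaton; (ii) for every $\omega\in S\cup S_+\cup R$, $\mathcal{H}$ accepts $\omega$ if and only if $\textsf{MQ}(\omega)=+$; (iii) for any $\omega_1,\omega_2\in S\cup S_+\cup R$, if $f(\omega_1,\omega_2,i_1,i_2)=\bot$ where $i_1,i_2$ are the last resets of $\omega_1,\omega_2$ determined by the assignment $\overline{b}$ (i.e. $lr(\omega_1,i_1)$ and $lr(\omega_2,i_2)$ hold), then $\overline{q_{\omega_1}}\neq\overline{q_{\omega_2}}$ and $\omega_1,\omega_2$ reach distinct locations in $\mathcal{H}$.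
   Context: Setting: a finite alphabet $\Sigma$, a single clock, and a target timed language $L$ with membership function $\textsf{MQ}(\omega)=+$ if $\omega\in L$, $-$ otherwise. A one-clock timed automaton (OTA) is $(\Sigma,Q,q_0,F,c,\Delta)$ with transitions $(q,\sigma,\phi,b,q')\in Q\times\Sigma\times\Phi_c\times\{\top,\bot\}\times Q$, guards $\phi$ being intervals with endpoints in $\mathbb{N}\cup\{\infty\}$; a timed word $(\sigma_1,t_1)\cdots(\sigma_n,t_n)$ ($t_i\ge0$ delays) runs from clock value $0$ at $q_0$, taking at step $i$ a transition from the current location with action $\sigma_i$ whose guard contains (current clock value $+t_i$), after which the clock becomes $0$ if the transition's reset flag $b=\top$ and (current clock $+t_i$) otherwise; it is accepted if the run ends in $F$. Deterministic means guards of transitions with the same source and action are disjoint. Regions relative to a fixed $\kappa\in\mathbb{N}$: $[n,n]$ for $n\le\kappa$, $(n,n+1)$ for $n<\kappa$, $(\kappa,\infty)$; $\llbracket v\rrbracket$ is the region containing $v$. For a timed word $\omega$ of length $n$ and $0\le i\le n$, $\nu_c(\omega,i)=\sum_{j=i+1}^n t_j$. Test $T(\omega_1,\omega_2,i_1,i_2,e)$: if $e$ empty, $T=\top$ iff $\textsf{MQ}(\omega_1)=\textsf{MQ}(\omega_2)$; otherwise, with $e=(\sigma_1,t_1)\cdots(\sigma_m,t_m)$, $\nu_1=\nu_c(\omega_1,i_1)$, $\nu_2=\nu_c(\omega_2,i_2)$, form $e_1,e_2$ by adding $|\nu_1-\nu_2|$ to the first delay of $e$ for the word with the smaller $\nu$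 (and $e_1=e_2=e$ if equal), and $T=\top$ iff $\textsf{MQ}(\omega_1e_1)=\textsf{MQ}(\omega_2e_2)$. If $m$ is the length of the longest common prefix of $\omega_1,\omega_2$, the valid last-reset combinations are $\mathcal{C}(\omega_1,\omega_2)=\{(i_1,i_2):0\le i_1\le|\omega_1|,0\le i_2\le|\omega_2|,(i_1\le m\wedge i_2\le m)\Rightarrow i_1=i_2\}$. An observation table $\mathcal{O}=(S,S_+,R,E,f,N)$: $S,S_+,R$ disjoint finite sets of timed words with $S\cup S_+\cup R$ prefix-closed, $\epsilon\in S$, and $\omega\cdot(\sigma,0)\in S\cup S_+\cup R$ for all $\omega\in S\cup S_+$, $\sigma\in\Sigma$; $E$ a finite set of timed words with $\epsilon\in E$; $N\in\mathbb{N}$; and $f(\omega_1,\omega_2,i_1,i_2)=\top$ iff $T(\omega_1,\omega_2,i_1,i_2,e)=\top$ for all $e\in E$ (for $\omega_1,\omega_2\in S\cup S_+\cup R$, $(i_1,i_2)\in\mathcal{C}(\omega_1,\omega_2)$), else $\bot$. Variables: for each $\omega\in S\cup S_+\cup R$ a Boolean ending reset variable $b_\omega$ (whether the clock resets after the last action of $\omega$; $b_\epsilon=\top$) and an integer location variable $q_\omega$. With $\omega|_i$ the length-$i$ prefix, $lr(\omega,i)=b_{\omega|_i}\wedge\bigwedge_{i<j\le|\omega|}\neg b_{\omega|_j}$ and $LR(\omega_1,\omega_2,i,j)=lr(\omega_1,i)\wedge lr(\omega_2,j)$. Constraints: $C_1$ is the conjunction over all $\omega_1,\omega_2$, $(i,j)\in\mathcal{C}(\omega_1,\omega_2)$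 with $f(\omega_1,\omega_2,i,j)=\bot$ of $LR(\omega_1,\omega_2,i,j)\Rightarrow q_{\omega_1}\neq q_{\omega_2}$. $C_2$ is the conjunction, over all $\omega_1,\omega_2$ with $\omega_1'=\omega_1(\sigma,t_1)$, $\omega_2'=\omega_2(\sigma,t_2)$ in $S\cup S_+\cup R$ and $(i,j)\in\mathcal{C}(\omega_1,\omega_2)$ with $f(\omega_1,\omega_2,i,j)=\top$ and $\llbracket\nu_c(\omega_1,i)+t_1\rrbracket=\llbracket\nu_c(\omega_2,j)+t_2\rrbracket$, of $(q_{\omega_1}=q_{\omega_2}\wedge LR(\omega_1,\omega_2,i,j))\Rightarrow(b_{\omega_1'}=b_{\omega_2'}\wedge q_{\omega_1'}=q_{\omega_2'})$. $C_3=\bigwedge_{1\le k\le N}\bigvee_{\omega\in S\cup S_+}q_\omega=k\ \wedge\ \bigwedge_{\omega\in S\cup S_+\cup R}1\le q_\omega\le N$. $C_4=\bigwedge_{1\le k\le|S|}q_{\omega_k}=k$ for a fixed enumeration $\omega_1,\dots,\omega_{|S|}$ of $S$. Hypothesis construction from an assignment $\overline{b},\overline{q}$: $Q_{\mathcal{H}}=\{\overline{q_\omega}:\omega\in S\cup S_+\}$, initial location $\overline{q_\epsilon}$, accepting $F_{\mathcal{H}}=\{\overline{q_\omega}:\omega\in S\cup S_+,\textsf{MQ}(\omega)=+\}$. For each pair $\omega_1,\omega_2=\omega_1(\sigma,t)$ in $S\cup S_+\cup R$ form the auxiliary transition $(\overline{q_{\omega_1}},\sigma,\psi,\overline{b_{\omega_2}},\overline{q_{\omega_2}})$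 where $\psi=\nu(\omega_1)+t$ and $\nu(\omega_1)$ is the clock value after $\omega_1$ computed using the resets $\overline{b}$ of its prefixes. For each $q,\sigma$, sort the list of values $\psi$ of auxiliary transitions from $q$ with action $\sigma$ as $\mu_0<\dots<\mu_n$ and apply the partition function $P$; for each auxiliary transition with value $\mu_i$ add $(q,\sigma,g_i,b,q')$ to $\Delta_{\mathcal{H}}$. The partition function: with $\mu_0=0$ and $\mu_{n+1}=\infty$, $g_i=[\mu_i,\mu_{i+1})$ if $\mu_i,\mu_{i+1}\in\mathbb{N}$; $(\lfloor\mu_i\rfloor,\mu_{i+1})$ if $\mu_i\notin\mathbb{N},\mu_{i+1}\in\mathbb{N}$; $[\mu_i,\lfloor\mu_{i+1}\rfloor]$ if $\mu_i\in\mathbb{N},\mu_{i+1}\notin\mathbb{N}$; $(\lfloor\mu_i\rfloor,\lfloor\mu_{i+1}\rfloor]$ if both $\notin\mathbb{N}$ (with $\infty$ treated as an integer). *)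

From mathcomp Require Import all_boot all_order all_algebra.
Set Implicit Arguments. Unset Strict Implicit. Unset Printing Implicit Defensive.
Import Order.TTheory GRing.Theory Num.Theory.
Local Open Scope ring_scope.

Section OTADefs.
Variables (Sigma : finType) (R : archiRealFieldType).

(* timed words: sequences of (action, delay) *)
Definition tword := seq (Sigma * R).
Definition valid_tw (w : tword) : bool := all (fun p => 0 <= p.2) w.

Definition nu_c (w : tword) (i : nat) : R := \sum_(p <- drop i w) p.2.

Definition add_first (d : R) (e : tword) : tword :=
  match e with [::] => [::] | (s, t) :: e' => (s, t + d) :: e' end.

Definition test (MQ : tword -> bool) (w1 w2 : tword) (i1 i2 : nat) (e : tword)
  : bool :=
  if e is [::] then MQ w1 == MQ w2 else
  let n1 := nu_c w1 i1 in let n2 := nu_c w2 i2 in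
  let e1 := if n1 < n2 then add_first (n2 - n1) e else e in
  let e2 := if n2 < n1 then add_first (n1 - n2) e else e in
  MQ (w1 ++ e1) == MQ (w2 ++ e2).

Fixpoint lcp (w1 w2 : tword) : nat :=
  match w1, w2 with
  | x :: a, y :: c => if x == y then (lcp a c).+1 else 0%N
  | _, _ => 0%N
  end.

Definition valid_comb (w1 w2 : tword) (i1 i2 : nat) : bool :=
  [&& (i1 <= size w1)%N, (i2 <= size w2)%N &
      ((i1 <= lcp w1 w2)%N && (i2 <= lcp w1 w2)%N) ==> (i1 == i2)].

Definition fO (MQ : tword -> bool) (E : seq tword) (w1 w2 : tword) (i1 i2 : nat)
  : bool := all (test MQ w1 w2 i1 i2) E.

(* O = (S, S_+, R, E, f, N) is an observation table (f is determined by MQ, E) *)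
Definition obs_table (S Sp Rs E : seq tword) : Prop :=
  let tbl := S ++ Sp ++ Rs in
  [/\ uniq S, uniq Sp, uniq Rs & uniq E] /\
  [/\ (forall w, w \in S -> w \notin Sp), (forall w, w \in S -> w \notin Rs)
    & (forall w, w \in Sp -> w \notin Rs)] /\
  [/\ (forall w k, w \in tbl -> take k w \in tbl),
      [::] \in S,
      (forall w (s : Sigma), w \in S ++ Sp -> rcons w (s, 0) \in tbl),
      [::] \in E
    & (forall w, w \in tbl ++ E -> valid_tw w)].

(* regions relative to kappa: None = (kappa, oo);
   Some (n, true) = [n, n]; Some (n, false) = (n, n+1) *)
Definition region (kappa : nat) (v : R) : option (int * bool) :=
  if kappa%:R < v then None else Some (Num.floor v, v \is a Num.int).

Section Vars.
Variables (b : tword -> bool) (q : tword -> nat).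

Definition lr (w : tword) (i : nat) : bool :=
  b (take i w) && all (fun j => ~~ b (take j w)) (iota i.+1 (size w - i)).

Definition LR (w1 w2 : tword) (i j : nat) : bool := lr w1 i && lr w2 j.

Definition C1 (MQ : tword -> bool) (S Sp Rs E : seq tword) : Prop :=
  forall w1 w2, w1 \in S ++ Sp ++ Rs -> w2 \in S ++ Sp ++ Rs ->
  forall i j, valid_comb w1 w2 i j -> fO MQ E w1 w2 i j = false ->
  LR w1 w2 i j -> q w1 <> q w2.

Definition C2 (MQ : tword -> bool) (kappa : nat) (S Sp Rs E : seq tword)
  : Prop :=
  forall w1 w2 (s : Sigma) (t1 t2 : R),
  rcons w1 (s, t1) \in S ++ Sp ++ Rs -> rcons w2 (s, t2) \in S ++ Sp ++ Rs ->
  forall i j, valid_comb w1 w2 i j -> fO MQ E w1 w2 i j = true ->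
  region kappa (nu_c w1 i + t1) = region kappa (nu_c w2 j + t2) ->
  q w1 = q w2 -> LR w1 w2 i j ->
  b (rcons w1 (s, t1)) = b (rcons w2 (s, t2)) /\
  q (rcons w1 (s, t1)) = q (rcons w2 (s, t2)).

Definition C3 (N : nat) (S Sp Rs : seq tword) : Prop :=
  (forall k, (1 <= k <= N)%N -> exists2 w, w \in S ++ Sp & q w = k) /\
  (forall w, w \in S ++ Sp ++ Rs -> (1 <= q w <= N)%N).

(* the fixed enumeration of S is the order of the list S *)
Definition C4 (S : seq tword) : Prop :=
  forall k, (k < size S)%N -> q (nth [::] S k) = k.+1.

Definition clock (w : tword) : R :=
  (foldl (fun (acc : R * tword) p =>
            let w' := rcons acc.2 p in
            ((if b w' then 0 else acc.1 + p.2), w')) (0, [::]) w).1.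

End Vars.

(* guards: intervals (lo, lo_closed, hi, hi_closed) with endpoints in N u {oo};
   hi = None means oo *)
Definition guard := (nat * bool * option nat * bool)%type.

Definition in_guard (g : guard) (v : R) : bool :=
  let '(lo, lc, hi, hc) := g in
  (if lc then lo%:R <= v else lo%:R < v) &&
  (match hi with
   | None => true
   | Some h => if hc then v <= h%:R else v < h%:R
   end).

Definition transition := (nat * Sigma * guard * bool * nat)%type.
Definition tsrc (tr : transition) : nat := tr.1.1.1.1.
Definition tact (tr : transition) : Sigma := tr.1.1.1.2.
Definition tguard (tr : transition) : guard := tr.1.1.2.
Definition treset (tr : transition) : bool := tr.1.2.
Definition ttgt (tr : transition) : nat := tr.2.

Record ota := OTA {
  locs : seq nat; init : nat; accs : seq nat; trans : seq transition }.

Definition is_ota (H : ota) : Prop :=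
  [/\ init H \in locs H,
      (forall l, l \in accs H -> l \in locs H) &
      (forall tr, tr \in trans H -> tsrc tr \in locs H /\ ttgt tr \in locs H)].

Definition deterministic (H : ota) : Prop :=
  forall tr1 tr2, tr1 \in trans H -> tr2 \in trans H -> tr1 != tr2 ->
  tsrc tr1 = tsrc tr2 -> tact tr1 = tact tr2 ->
  forall v : R, ~~ (in_guard (tguard tr1) v && in_guard (tguard tr2) v).

Definition is_DOTA (H : ota) : Prop := is_ota H /\ deterministic H.

Fixpoint run (H : ota) (l : nat) (c : R) (w : tword) (l' : nat) : Prop :=
  match w with
  | [::] => l' = l
  | (s, t) :: w' =>
      exists2 tr, tr \in trans H &
        [/\ tsrc tr = l, tact tr = s, in_guard (tguard tr) (c + t) &
            run H (ttgt tr) (if treset tr then 0 else c + t) w' l']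
  end.

Definition accepts (H : ota) (w : tword) : Prop :=
  exists2 l, run H (init H) 0 w l & l \in accs H.

(* the partition function: guard g_i for the sorted values mus = mu_0 < ... < mu_n,
   with mu_0 replaced by 0 and mu_{n+1} = oo *)
Definition part (mus : seq R) (i : nat) : guard :=
  let a := if i == 0%N then 0 else nth 0 mus i in
  let hb := if (i.+1 < size mus)%N then Some (nth 0 mus i.+1) else None in
  (Num.truncn a, a \is a Num.nat, omap (@Num.truncn R) hb,
   match hb with Some x => x \isn't a Num.nat | None => false end).

Definition aux_of (b : tword -> bool) (q : tword -> nat) (w2 : tword)
  : option (nat * Sigma * R * bool * nat) :=
  match w2 with
  | [::] => None
  | x :: w' => let w1 := belast x w' in let p := last x w' in
      Some (q w1, p.1, clock b w1 + p.2, b w2, q w2)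
  end.

Definition hypothesis (MQ : tword -> bool) (S Sp Rs : seq tword)
  (b : tword -> bool) (q : tword -> nat) : ota :=
  let aux := pmap (aux_of b q) (S ++ Sp ++ Rs) in
  let mk (a : nat * Sigma * R * bool * nat) : transition :=
    let '(src, s, psi, rs, tgt) := a in
    let mus := sort <=%R (undup [seq a'.1.1.2 | a' <- aux &
                                   (a'.1.1.1.1 == src) && (a'.1.1.1.2 == s)]) in
    (src, s, part mus (index psi mus), rs, tgt) in
  OTA (undup [seq q w | w <- S ++ Sp]) (q [::])
      (undup [seq q w | w <- S ++ Sp & MQ w]) [seq mk a | a <- aux].

End OTADefs.

From mathcomp Require Import all_boot all_order all_algebra.
Import Order.TTheory GRing.Theory Num.Theory.
Local Open Scope ring_scope.

(* In the hypothesis the location reached by a table word w is q w.  By C1,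
   table words with the same location, taken at their last resets (which
   always form a valid combination), agree on every test, in particular on
   membership.  By C2, their extensions by one action with clock values in
   the same region have the same reset and location; as the cell of [part]
   containing a clock value is that of a listed value in the same region, the
   transition enabled after w leads to the location of the extension of w.
   Transitions with the same source and action carry distinct cells of one
   partition unless they coincide, so the hypothesis is deterministic. *)

Set Implicit Arguments.
Unset Strict Implicit.

Section RegionIndex.
Variable R : archiRealFieldType.
Implicit Types (u v a : R) (mus : seq R).

(* For [v >= 0], the position of its region in the sequence {0}, (0,1), {1}, ... *)
Definition region_index v : nat := (v \isn't a Num.nat) + (Num.truncn v).*2.

Lemma ltr_nat_notnat n v : v \isn't a Num.nat -> (n%:R < v) = (n%:R <= v).
Proof.
by move=> vN; rewrite lt_neqAle; case: eqP => // nv; rewrite -nv natr_nat in vN.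
Qed.

Lemma region_index_leE a v : 0 <= a -> 0 <= v ->
  (region_index a <= region_index v)%N =
  (if a \is a Num.nat then (Num.truncn a)%:R <= v else (Num.truncn a)%:R < v).
Proof.
move=> a0 v0; rewrite /region_index.
case aN: (a \is a Num.nat); case vN: (v \is a Num.nat) => /=.
- by rewrite !add0n leq_double truncn_ge_nat.
- by rewrite add0n add1n leq_Sdouble truncn_ge_nat.
- by rewrite add0n add1n ltn_double -[v in RHS](truncnK vN) ltr_nat.
- by rewrite ltr_nat_notnat ?vN // -truncn_ge_nat // !add1n ltnS leq_double.
Qed.

Lemma region_index_le u v : 0 <= u -> u <= v -> (region_index u <= region_index v)%N.
Proof.
move=> u0 uv; rewrite region_index_leE ?(le_trans u0) //.
case: ifP => uN; first by rewrite truncnK.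
by rewrite (lt_le_trans _ uv) // ltr_nat_notnat ?uN // truncn_le.
Qed.

Lemma ltr_nat_region_index n v : 0 <= v -> (n%:R < v) = (n.*2 < region_index v)%N.
Proof.
move=> v0; rewrite /region_index; case vN: (v \is a Num.nat) => /=.
  by rewrite add0n ltn_double -[v in LHS](truncnK vN) ltr_nat.
by rewrite ltr_nat_notnat ?vN // -truncn_ge_nat // add1n ltnS leq_double.
Qed.

Lemma region_region_index kappa v : 0 <= v ->
  region kappa v = if (kappa.*2 < region_index v)%N then None
                   else Some (((region_index v)./2)%:Z, ~~ odd (region_index v)).
Proof.
move=> v0; rewrite /region ltr_nat_region_index // half_bit_double.
rewrite oddD odd_double addbF oddb negbK intrEge0 //.
by rewrite truncn_floor v0 gez0_abs ?floor_ge0.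
Qed.

Lemma region_index_region kappa u v : 0 <= u -> 0 <= v ->
  region_index u = region_index v -> region kappa u = region kappa v.
Proof. by move=> u0 v0 uv; rewrite !region_region_index // uv. Qed.

Lemma in_guard_ge0 (g : guard) v : in_guard g v -> 0 <= v.
Proof.
case: g => [[[lo []] hi] hc] /andP [lov _]; first exact: le_trans lov.
exact: ltW (le_lt_trans _ lov).
Qed.

Lemma nth_ge0 mus k : all (fun x => 0 <= x) mus -> 0 <= nth 0 mus k.
Proof.
move=> /allP mus0; have [ks|ks] := ltnP k (size mus); first by rewrite mus0 ?mem_nth.
by rewrite nth_default.
Qed.

Lemma in_guard_part mus k v : all (fun x => 0 <= x) mus -> 0 <= v ->
  in_guard (part mus k) v =
  (region_index (if k == 0%N then 0%R else nth 0%R mus k) <= region_index v)%N &&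
  ((k.+1 < size mus)%N ==> (region_index v < region_index (nth 0%R mus k.+1))%N).
Proof.
move=> mus0 v0; have a0 : 0 <= if k == 0%N then 0 else nth 0 mus k.
  by case: eqP => _; rewrite ?(nth_ge0 _ mus0).
rewrite /part /in_guard region_index_leE //; congr andb.
case: (k.+1 < size mus)%N => //=.
rewrite ltnNge region_index_leE ?(nth_ge0 _ mus0) //.
by case: (nth 0 mus k.+1 \is a Num.nat) => /=; [exact: ltNge | exact: leNgt].
Qed.

Lemma part_disjoint mus k1 k2 v :
  all (fun x => 0 <= x) mus -> sorted <=%R mus -> (k1 < k2 < size mus)%N ->
  ~~ (in_guard (part mus k1) v && in_guard (part mus k2) v).
Proof.
move=> mus0 mus_sorted /andP [k12 k2s]; apply/negP => /andP [g1 g2].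
have v0 := in_guard_ge0 g1; have k2P : (0 < k2)%N := leq_ltn_trans (leq0n k1) k12.
move: g1 g2; rewrite !in_guard_part // (leq_ltn_trans k12 k2s) (eqn0Ngt k2) k2P /=.
move=> /andP [_ v_lt] /andP [le_v _].
have mono : (region_index (nth 0%R mus k1.+1) <= region_index (nth 0%R mus k2))%N.
  apply: region_index_le; first exact: nth_ge0.
  by apply: le_sorted_leq_nth; rewrite ?inE ?(leq_ltn_trans k12 k2s).
by have := leq_trans (leq_trans v_lt mono) le_v; rewrite ltnn.
Qed.

End RegionIndex.

Section LastReset.
Variables (Sigma : finType) (R : archiRealFieldType).
Implicit Types (w u : tword Sigma R).

Lemma take_lcp w1 w2 k : (k <= lcp w1 w2)%N -> take k w1 = take k w2.
Proof.
elim: w1 w2 k => [|x w1 IH] [|y w2] [|k] //=.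
case: eqP => // -> /IH -> //.
Qed.

Lemma lcp_leq_sizel w1 w2 : (lcp w1 w2 <= size w1)%N.
Proof. by elim: w1 w2 => [|x w1 IH] [|y w2] //=; case: eqP => // _; exact: IH. Qed.

Lemma lcp_leq_sizer w1 w2 : (lcp w1 w2 <= size w2)%N.
Proof. by elim: w1 w2 => [|x w1 IH] [|y w2] //=; case: eqP => // _; exact: IH. Qed.

Variable b : tword Sigma R -> bool.

Lemma clock_rcons w p :
  clock b (rcons w p) = if b (rcons w p) then 0 else clock b w + p.2.
Proof.
have snd u c v : (foldl (fun (acc : R * tword Sigma R) p =>
    let w' := rcons acc.2 p in ((if b w' then 0 else acc.1 + p.2), w')) (c, v) u).2
    = v ++ u.
  by elim: u c v => [|x u IH] c v /=; rewrite ?cats0 // IH cat_rcons.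
by rewrite /clock foldl_rcons /= snd.
Qed.

Lemma clock_ge0 w : valid_tw w -> 0 <= clock b w.
Proof.
elim/last_ind: w => [|w p IH] //; rewrite /valid_tw all_rcons => /andP [p0 /IH w0].
by rewrite clock_rcons; case: ifP => // _; apply: addr_ge0.
Qed.

Lemma lr_noreset w i j : lr b w i -> (i < j <= size w)%N -> ~~ b (take j w).
Proof.
move=> /andP [_ /allP noreset] /andP [ij jw]; apply: noreset.
by rewrite mem_iota ij addSn ltnS subnKC // (leq_trans (ltnW ij)).
Qed.

Lemma lr_rcons_reset w p : b (rcons w p) -> lr b (rcons w p) (size w).+1.
Proof. by move=> bp; rewrite /lr -(size_rcons w p) take_size bp subnn. Qed.

Lemma lr_rcons w p i :
  ~~ b (rcons w p) -> (i <= size w)%N -> lr b w i -> lr b (rcons w p) i.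
Proof.
move=> bp iw /andP [bi noreset]; rewrite /lr -cats1 takel_cat // bi /=.
rewrite size_cat /= -addnBAC // iotaD all_cat; apply/andP; split.
  apply/allP => j; rewrite mem_iota addSn ltnS subnKC // => /andP [ij jw].
  by rewrite takel_cat // (allP noreset) // mem_iota ij addSn ltnS subnKC.
by rewrite addSn subnKC //= andbT cats1 -(size_rcons w p) take_size.
Qed.

Lemma exists_last_reset w : b [::] ->
  exists i, [/\ (i <= size w)%N, lr b w i & clock b w = nu_c w i].
Proof.
move=> b0; elim/last_ind: w => [|w p [i [iw lri ci]]].
  by exists 0%N; rewrite /lr /nu_c /= b0 big_nil.
case bp: (b (rcons w p)).
  exists (size w).+1; rewrite size_rcons lr_rcons_reset // clock_rcons bp.
  by rewrite /nu_c -(size_rcons w p) drop_size big_nil.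
exists i; rewrite size_rcons (leq_trans iw) // lr_rcons ?bp //.
by rewrite clock_rcons bp ci /nu_c drop_rcons // big_rcons.
Qed.

Lemma valid_comb_lr w1 w2 i j : (i <= size w1)%N -> (j <= size w2)%N ->
  lr b w1 i -> lr b w2 j -> valid_comb w1 w2 i j.
Proof.
move=> iw jw lri lrj; rewrite /valid_comb iw jw; apply/implyP => /andP [il jl].
case: ltngtP => // [ij|ji].
  have ijw : (i < j <= size w1)%N by rewrite ij (leq_trans jl (lcp_leq_sizel _ _)).
  by have := lr_noreset lri ijw; rewrite (take_lcp jl) (andP lrj).1.
have jiw : (j < i <= size w2)%N by rewrite ji (leq_trans il (lcp_leq_sizer _ _)).
by have := lr_noreset lrj jiw; rewrite -(take_lcp il) (andP lri).1.
Qed.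

End LastReset.

Lemma run_deterministic (Sigma : finType) (R : archiRealFieldType) (H : ota Sigma)
    w l (c : R) l1 l2 :
  deterministic R H -> run H l c w l1 -> run H l c w l2 -> l1 = l2.
Proof.
move=> detH; elim: w l c => [|[s t] w IH] l c /=; first by move=> -> ->.
move=> [tr1 h1 [src1 act1 g1 r1]] [tr2 h2 [src2 act2 g2 r2]].
have [e|ne] := eqVneq tr1 tr2; first by subst tr2; exact: IH r1 r2.
have := detH _ _ h1 h2 ne (etrans src1 (esym src2)) (etrans act1 (esym act2)) (c + t).
by rewrite g1 g2.
Qed.

Section HypothesisAutomaton.
Variables (Sigma : finType) (R : archiRealFieldType) (MQ : tword Sigma R -> bool).
Variables (kappa N : nat) (S Sp Rs E : seq (tword Sigma R)).
Variables (b : tword Sigma R -> bool) (q : tword Sigma R -> nat).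
Implicit Types (w u v : tword Sigma R).

Local Notation tbl := (S ++ Sp ++ Rs).
Local Notation Hyp := (hypothesis MQ S Sp Rs b q).

Hypothesis tbl_prefix_closed : forall w k, w \in tbl -> take k w \in tbl.
Hypothesis tbl_valid : forall w, w \in tbl -> valid_tw w.
Hypothesis b_nil : b [::].
Hypothesis nil_E : [::] \in E.
Hypothesis HC1 : C1 b q MQ S Sp Rs E.
Hypothesis HC2 : C2 b q MQ kappa S Sp Rs E.

Lemma mem_tbl_rcons w p : rcons w p \in tbl -> w \in tbl.
Proof.
by move=> /(tbl_prefix_closed (size w)); rewrite -cats1 takel_cat // take_size.
Qed.

Lemma tbl_step_ge0 w p : rcons w p \in tbl -> 0 <= clock b w + p.2.
Proof.
move=> hw; apply: addr_ge0; first exact/clock_ge0/tbl_valid/(mem_tbl_rcons hw).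
by apply: (allP (tbl_valid hw)); rewrite mem_rcons mem_head.
Qed.

Lemma same_location_fO w1 w2 i j : w1 \in tbl -> w2 \in tbl ->
  (i <= size w1)%N -> (j <= size w2)%N -> lr b w1 i -> lr b w2 j ->
  q w1 = q w2 -> fO MQ E w1 w2 i j.
Proof.
move=> h1 h2 iw jw lri lrj e; apply/negPn/negP => /negbTE f_bot.
by apply: (HC1 h1 h2 (valid_comb_lr iw jw lri lrj) f_bot) => //; rewrite /LR lri lrj.
Qed.

Lemma same_location_MQ w1 w2 : w1 \in tbl -> w2 \in tbl -> q w1 = q w2 -> MQ w1 = MQ w2.
Proof.
move=> h1 h2 e; have [i [iw lri _]] := exists_last_reset w1 b_nil.
have [j [jw lrj _]] := exists_last_reset w2 b_nil.
by have /allP/(_ _ nil_E)/eqP := same_location_fO h1 h2 iw jw lri lrj e.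
Qed.

Lemma same_location_step w1 w2 s t1 t2 :
  rcons w1 (s, t1) \in tbl -> rcons w2 (s, t2) \in tbl -> q w1 = q w2 ->
  region_index (clock b w1 + t1) = region_index (clock b w2 + t2) ->
  b (rcons w1 (s, t1)) = b (rcons w2 (s, t2)) /\
  q (rcons w1 (s, t1)) = q (rcons w2 (s, t2)).
Proof.
move=> h1 h2 e same_region.
have [i [iw lri ci]] := exists_last_reset w1 b_nil.
have [j [jw lrj cj]] := exists_last_reset w2 b_nil.
apply: (HC2 h1 h2 (valid_comb_lr iw jw lri lrj)) => //.
- exact: same_location_fO (mem_tbl_rcons h1) (mem_tbl_rcons h2) iw jw lri lrj e.
- rewrite -ci -cj; apply: region_index_region same_region.
  + exact: tbl_step_ge0 h1.
  + exact: tbl_step_ge0 h2.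
- by rewrite /LR lri lrj.
Qed.

Let aux := pmap (aux_of b q) tbl.

Definition aux_entry w (p : Sigma * R) : nat * Sigma * R * bool * nat :=
  (q w, p.1, clock b w + p.2, b (rcons w p), q (rcons w p)).

Definition guard_values (src : nat) (s : Sigma) : seq R :=
  sort <=%R (undup [seq a.1.1.2 | a <- aux & (a.1.1.1.1 == src) && (a.1.1.1.2 == s)]).

Definition aux_transition (a : nat * Sigma * R * bool * nat) : transition Sigma :=
  let '(src, s, psi, rs, tgt) := a in
  (src, s, part (guard_values src s) (index psi (guard_values src s)), rs, tgt).

Lemma tguard_aux_transition w s t :
  tguard (aux_transition (aux_entry w (s, t))) =
  part (guard_values (q w) s) (index (clock b w + t) (guard_values (q w) s)).
Proof. by []. Qed.

Lemma trans_hypothesis : trans Hyp = map aux_transition aux.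
Proof. by apply: eq_map => -[[[[src s] psi] rs] tgt]. Qed.

Lemma aux_of_rcons w p : aux_of b q (rcons w p) = Some (aux_entry w p).
Proof. by case: w => [|x w] //=; rewrite belast_rcons last_rcons. Qed.

Lemma aux_entry_in w p : rcons w p \in tbl -> aux_entry w p \in aux.
Proof. by move=> hw; rewrite mem_pmap -aux_of_rcons map_f. Qed.

Lemma mem_aux a : a \in aux -> exists w p, rcons w p \in tbl /\ a = aux_entry w p.
Proof.
rewrite mem_pmap => /mapP [u hu]; case/lastP: u hu => [|w p] // hw.
by rewrite aux_of_rcons => -[->]; exists w, p.
Qed.

Lemma aux_transition_in w p :
  rcons w p \in tbl -> aux_transition (aux_entry w p) \in trans Hyp.
Proof. by move=> hw; rewrite trans_hypothesis map_f ?aux_entry_in. Qed.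

Lemma mem_trans_hypothesis tr : tr \in trans Hyp ->
  exists w p, rcons w p \in tbl /\ tr = aux_transition (aux_entry w p).
Proof.
by rewrite trans_hypothesis => /mapP [a /mem_aux [w [p [hw ->]]] ->]; exists w, p.
Qed.

Lemma guard_values_in w s t :
  rcons w (s, t) \in tbl -> clock b w + t \in guard_values (q w) s.
Proof.
move=> hw; rewrite mem_sort mem_undup; apply/mapP.
by exists (aux_entry w (s, t)); rewrite // mem_filter /= !eqxx aux_entry_in.
Qed.

Lemma mem_guard_values src s x : x \in guard_values src s ->
  exists w t, [/\ rcons w (s, t) \in tbl, q w = src & clock b w + t = x].
Proof.
rewrite mem_sort mem_undup => /mapP [a]; rewrite mem_filter.
move=> /andP [/andP [/eqP e_src /eqP e_s] /mem_aux [w [[s' t] [hw ea]]]] ->.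
by subst a; move: e_src e_s => /= <- <-; exists w, t.
Qed.

Lemma guard_values_ge0 src s : all (fun x => 0 <= x) (guard_values src s).
Proof.
by apply/allP => x /mem_guard_values [w [t [hw _ <-]]]; apply: tbl_step_ge0 hw.
Qed.

Lemma guard_values_sorted src s : sorted <=%R (guard_values src s).
Proof. exact: sort_le_sorted. Qed.

Lemma guard_values_uniq src s : uniq (guard_values src s).
Proof. by rewrite sort_uniq undup_uniq. Qed.

Lemma enabled_transition w s t : rcons w (s, t) \in tbl ->
  exists2 tr, tr \in trans Hyp &
    [/\ tsrc tr = q w, tact tr = s, in_guard (tguard tr) (clock b w + t),
        treset tr = b (rcons w (s, t)) & ttgt tr = q (rcons w (s, t))].
Proof.
move=> hw; set mus := guard_values (q w) s; set psi := clock b w + t.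
have psi_in : psi \in mus := guard_values_in hw.
have psi0 : 0 <= psi := tbl_step_ge0 hw.
(* psi lies in the cell of the last value of mus whose region is not above
   its own, and that value is in the region of psi. *)
pose P k := (k < size mus)%N && (region_index (nth 0%R mus k) <= region_index psi)%N.
have exP : exists k, P k.
  by exists (index psi mus); rewrite /P index_mem psi_in nth_index ?leqnn.
have ubP k : P k -> (k <= size mus)%N by case/andP => /ltnW.
case: (ex_maxnP exP ubP) => k /andP [ks k_le] k_max.
have same_region : region_index (nth 0 mus k) = region_index psi.
  apply/eqP; rewrite eqn_leq k_le -{1}(nth_index 0 psi_in).
  apply: region_index_le; first exact: nth_ge0 (guard_values_ge0 _ _).
  apply: le_sorted_leq_nth; rewrite ?inE ?index_mem ?guard_values_sorted //.
  by apply: k_max; rewrite /P index_mem psi_in nth_index ?leqnn.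
have [w' [t' [hw' qw' e']]] := mem_guard_values (mem_nth 0 ks).
have [-> ->] : b (rcons w (s, t)) = b (rcons w' (s, t')) /\
               q (rcons w (s, t)) = q (rcons w' (s, t')).
  by apply: same_location_step hw hw' (esym qw') _; rewrite e' same_region.
have in_g : in_guard (part mus k) psi.
  rewrite in_guard_part ?guard_values_ge0 //; apply/andP; split.
    by case: eqP => _ //; apply: region_index_le.
  apply/implyP => k1s; rewrite ltnNge; apply/negP => le_psi.
  by have := k_max k.+1; rewrite /P k1s le_psi ltnn => /(_ isT).
exists (aux_transition (aux_entry w' (s, t'))); first exact: aux_transition_in.
by rewrite tguard_aux_transition qw' -/mus e' index_uniq ?guard_values_uniq.
Qed.

Lemma hypothesis_deterministic : deterministic R Hyp.
Proof.
move=> tr1 tr2 /mem_trans_hypothesis [w1 [[s t1] [h1 ->]]].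
move=> /mem_trans_hypothesis [w2 [[s2 t2] [h2 ->]]] ne e_src e_s v.
have {}e_s : s = s2 := e_s; have {}e_src : q w1 = q w2 := e_src; subst s2.
rewrite !tguard_aux_transition -e_src.
set mus := guard_values (q w1) s.
have i1 : clock b w1 + t1 \in mus := guard_values_in h1.
have i2 : clock b w2 + t2 \in mus by rewrite /mus e_src; apply: guard_values_in.
have [e|ne_psi] := eqVneq (clock b w1 + t1) (clock b w2 + t2).
  have [eb eq] := same_location_step h1 h2 e_src (congr1 _ e).
  by move: ne; rewrite /aux_entry /= e_src e eb eq eqxx.
have ne_idx : index (clock b w1 + t1) mus != index (clock b w2 + t2) mus.
  by apply: contra ne_psi => /eqP e; rewrite -(nth_index 0 i1) e nth_index.
have mus0 := guard_values_ge0 (q w1) s; have mus_sorted := guard_values_sorted (q w1) s.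
rewrite -!index_mem in i1 i2; case: ltngtP ne_idx => // lt _.
  by apply: part_disjoint; rewrite ?lt.
by rewrite andbC; apply: part_disjoint; rewrite ?lt.
Qed.

Lemma run_hypothesis_from u v :
  u ++ v \in tbl -> run Hyp (q u) (clock b u) v (q (u ++ v)).
Proof.
elim: v u => [|[s t] v IH] u huv /=; first by rewrite cats0.
have hu : rcons u (s, t) \in tbl.
  move: (tbl_prefix_closed (size u).+1 huv).
  by rewrite -cat_rcons takel_cat ?size_rcons // -(size_rcons u (s, t)) take_size.
have [tr htr [src act g rs tgt]] := enabled_transition hu.
exists tr => //; split => //; rewrite tgt rs.
by have := IH (rcons u (s, t)); rewrite clock_rcons cat_rcons; apply.
Qed.

Lemma run_hypothesis w : w \in tbl -> run Hyp (init Hyp) 0 w (q w).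
Proof. exact: (@run_hypothesis_from [::] w). Qed.

Lemma run_hypothesis_tbl w l : w \in tbl -> run Hyp (init Hyp) 0 w l -> l = q w.
Proof.
by move=> hw r; apply: run_deterministic hypothesis_deterministic r (run_hypothesis hw).
Qed.

Hypothesis nil_S : [::] \in S.
Hypothesis HC3 : C3 q N S Sp Rs.

Lemma location_in_locs w : w \in tbl -> q w \in locs Hyp.
Proof.
case: HC3 => cover range /range /cover [w' hw' <-].
by rewrite mem_undup map_f.
Qed.

Lemma hypothesis_is_ota : is_ota Hyp.
Proof.
split.
- by rewrite /= mem_undup map_f // mem_cat nil_S.
- move=> l; rewrite /= !mem_undup => /mapP [w].
  by rewrite mem_filter => /andP [_ hw] ->; apply: map_f.
- move=> tr /mem_trans_hypothesis [w [p [hw ->]]].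
  by split; apply: location_in_locs => //; apply: mem_tbl_rcons hw.
Qed.

Lemma hypothesis_accepts w : w \in tbl -> accepts Hyp w <-> MQ w.
Proof.
move=> hw; split.
  move=> [l /(run_hypothesis_tbl hw) ->]; rewrite /= mem_undup => /mapP [w'].
  rewrite mem_filter => /andP [MQw' hw'] e.
  by rewrite (same_location_MQ hw _ e) // catA mem_cat hw'.
move=> MQw; exists (q w); first exact: run_hypothesis.
case: HC3 => cover range; have [w' hw' e] := cover _ (range w hw).
rewrite /= mem_undup -e map_f // mem_filter hw' andbT.
by rewrite (same_location_MQ _ hw e) // catA mem_cat hw'.
Qed.

End HypothesisAutomaton.

Unset Implicit Arguments.
Set Strict Implicit.

Theorem theorem1 (Sigma : finType) (R : archiRealFieldType)
  (MQ : tword Sigma R -> bool) (kappa : nat)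
  (S Sp Rs E : seq (tword Sigma R)) (N : nat)
  (b : tword Sigma R -> bool) (q : tword Sigma R -> nat) :
  obs_table S Sp Rs E ->
  b [::] = true ->
  C1 b q MQ S Sp Rs E ->
  C2 b q MQ kappa S Sp Rs E ->
  C3 q N S Sp Rs ->
  C4 q S ->
  let H := hypothesis MQ S Sp Rs b q in
  [/\ is_DOTA R H,
      (forall w, w \in S ++ Sp ++ Rs -> (accepts (R:=R) H w <-> MQ w = true)) &
      (forall w1 w2, w1 \in S ++ Sp ++ Rs -> w2 \in S ++ Sp ++ Rs ->
       forall i1 i2, (i1 <= size w1)%N -> (i2 <= size w2)%N ->
       lr b w1 i1 -> lr b w2 i2 -> fO MQ E w1 w2 i1 i2 = false ->
       [/\ q w1 <> q w2,
           exists l1 l2, run (R:=R) H (init H) 0 w1 l1 /\ run (R:=R) H (init H) 0 w2 l2 &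
           forall l1 l2, run (R:=R) H (init H) 0 w1 l1 -> run (R:=R) H (init H) 0 w2 l2 ->
             l1 <> l2])].
Proof.
(* C4 only breaks the symmetry between solutions; correctness does not need it. *)
move=> [_ [_ [prefix_closed nil_S _ nil_E valid]]] b_nil HC1 HC2 HC3 _ H.
have tbl_valid w : w \in S ++ Sp ++ Rs -> valid_tw w.
  by move=> hw; apply: valid; rewrite mem_cat hw.
have run_tbl := run_hypothesis prefix_closed tbl_valid b_nil HC1 HC2.
have run_tbl_uniq := run_hypothesis_tbl prefix_closed tbl_valid b_nil HC1 HC2.
split.
- split; first exact: hypothesis_is_ota prefix_closed nil_S HC3.
  exact: hypothesis_deterministic prefix_closed tbl_valid b_nil HC1 HC2.
- exact: hypothesis_accepts prefix_closed tbl_valid b_nil nil_E HC1 HC2 HC3.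
- move=> w1 w2 h1 h2 i1 i2 iw1 iw2 lr1 lr2 f_bot.
  have ne : q w1 <> q w2.
    apply: (HC1 _ _ h1 h2 _ _ (valid_comb_lr iw1 iw2 lr1 lr2) f_bot).
    by rewrite /LR lr1 lr2.
  split=> //.
    by exists (q w1), (q w2); split; apply: run_tbl.
  by move=> l1 l2 /(run_tbl_uniq _ _ h1) -> /(run_tbl_uniq _ _ h2) ->.
Qed.
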